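(* Let $D$ be a flagging monitor over the alphabet $\Sigma$ and $\varphi$ a co-safety LTL formula over propositions ${\cal P}$ with $\Sigma=2^{\cal P}$. For every infinite trace $\sigma$ and indices $i\le j$: if $\sigma_{i,j}\vdash D;\varphi$, then for all $k>j$, $\sigma_{i,k}\not\vdash D;\varphi$.
   Context: For an infinite trace $\sigma=\sigma_0\sigma_1\cdots$ over $\Sigma$ and $i\le j$, $\sigma_{i,j}=\sigma_i\cdots\sigma_j$. Flagging monitor: a tuple $D=\langle \Sigma, \mathbb{V}, \Theta, Q, \theta_0, q_0, F, \perp, \rightarrow\rangle$ ($\mathbb{V}$ typed variables, $\Theta$ valuations, $Q$ finite states, $\theta_0$ initial valuation, $q_0$ initial state, $F\subseteq Q\setminus\{q_0\}$ flagging states, $\perp$ sink, $\rightarrow$ deterministic transitions $q\xrightarrow{g\mapsto a}q'$ from $q\ne\perp$ with guard $g:\Sigma\times\Theta\to\{\mathit{true},\mathit{false}\}$ and action $a:\Sigma\times\Theta\to\Theta$). Semantics on configurations $(q,\theta)$ reading $E$: (1) if $q\notin F\cup\{\perp\}$ and a transition from $q$ has true guard on $(E,\theta)$, take it, updating the valuation to $a(E,\theta)$; (2) if $q\notin F\cup\{\perp\}$ and no guard holds, stay; (3) $\perp$ stays $\perp$; (4) a flagging state moves to $\perp$ (valuation unchanged). $\sigma_{i,j}\Vdash D$ iff the run from $(q_0,\theta_0)$ on $\sigma_i,\dots,\sigma_j$ ends in a state of $F$. Co-safety LTL: $\varphi ::= \mathit{tt}\mid \mathit{ff}\mid e\mid\neg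 e\mid \varphi\wedge\varphi\mid\varphi\vee\varphi\mid X\varphi\mid \varphi U\varphi$ with $e\in{\cal P}$. Finite-trace semantics for $i\le j<\infty$: $\sigma_{i,j}\vdash\mathit{tt}$ always, $\vdash\mathit{ff}$ never; $\sigma_{i,j}\vdash e$ iff $e\in\sigma_i$; $\sigma_{i,j}\vdash\neg e$ iff $e\notin\sigma_i$; $\wedge,\vee$ as usual; $\sigma_{i,j}\vdash X\varphi$ iff $j>i$ and $\sigma_{i+1,j}\vdash\varphi$; $\sigma_{i,j}\vdash\varphi U\psi$ iff there is $l$ with $i\le l\le j$, $\sigma_{l,j}\vdash\psi$ and $\sigma_{k,j}\vdash\varphi$ for all $i\le k<l$. Tight satisfaction: $\sigma_{i,j}\Vdash\varphi$ iff $\sigma_{i,j}\vdash\varphi$ and $\sigma_{i,k}\not\vdash\varphi$ for all $i\le k<j$. One step of a repeating trigger: $\sigma_{i,k}\vdash D;\varphi$ iff there is $j$ with $i\le j\le k$, $\sigma_{i,j}\Vdash D$ and $\sigma_{j,k}\Vdash\varphi$. *)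

From mathcomp Require Import all_boot.
From Stdlib Require List.
Set Implicit Arguments.
Unset Strict Implicit.
Unset Printing Implicit Defensive.

(* Letters: Sigma = 2^P, represented as characteristic functions P -> bool. *)
Definition letter (P : Type) := P -> bool.
Definition trace (Sigma : Type) := nat -> Sigma.

(* sigma_{i,j} = sigma_i ... sigma_j (as a list; meaningful for i <= j). *)
Definition segment (Sigma : Type) (s : trace Sigma) (i j : nat) : list Sigma :=
  map s (iota i (j.+1 - i)).

(* Flagging monitors.  Theta is the type of valuations of the typed
   variables V; guards and actions are functions of (E, theta).      *)
Record flagging_monitor (Sigma Theta : Type) := FlaggingMonitor {
  mQ : finType;
  mtheta0 : Theta;
  mq0 : mQ;
  mF : pred mQ;
  mbot : mQ;
  mtrans : list (mQ * (Sigma -> Theta -> bool) * (Sigma -> Theta -> Theta) * mQ)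
}.
Arguments mQ {Sigma Theta} f.
Arguments mtheta0 {Sigma Theta} f.
Arguments mq0 {Sigma Theta} f.
Arguments mF {Sigma Theta} f _.
Arguments mbot {Sigma Theta} f.
Arguments mtrans {Sigma Theta} f.

Definition wf_monitor (Sigma Theta : Type) (D : flagging_monitor Sigma Theta) :=
  [/\ ~~ mF D (mq0 D),
      ~~ mF D (mbot D),
      (forall q g a q', List.In (q, g, a, q') (mtrans D) -> q != mbot D)
    & (forall q g1 a1 q1 g2 a2 q2 E th,
        List.In (q, g1, a1, q1) (mtrans D) -> List.In (q, g2, a2, q2) (mtrans D) ->
        g1 E th -> g2 E th -> (g1, a1, q1) = (g2, a2, q2))].

Inductive mstep (Sigma Theta : Type) (D : flagging_monitor Sigma Theta) :
  mQ D * Theta -> Sigma -> mQ D * Theta -> Prop :=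
| mstep_take q th E g a q' :
    ~~ mF D q -> q != mbot D -> List.In (q, g, a, q') (mtrans D) -> g E th ->
    @mstep Sigma Theta D (q, th) E (q', a E th)
| mstep_stay q th E :
    ~~ mF D q -> q != mbot D ->
    (forall g a q', List.In (q, g, a, q') (mtrans D) -> ~~ g E th) ->
    @mstep Sigma Theta D (q, th) E (q, th)
| mstep_bot th E : @mstep Sigma Theta D (mbot D, th) E (mbot D, th)
| mstep_flag q th E : mF D q -> @mstep Sigma Theta D (q, th) E (mbot D, th).

Arguments mstep {Sigma Theta} D _ _ _.

Inductive mrun (Sigma Theta : Type) (D : flagging_monitor Sigma Theta) :
  mQ D * Theta -> list Sigma -> mQ D * Theta -> Prop :=
| mrun_nil c : @mrun Sigma Theta D c nil c
| mrun_cons c E w c' c'' : @mstep Sigma Theta D c E c' -> @mrun Sigma Theta D c' w c'' -> @mrun Sigma Theta D c (E :: w) c''.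
Arguments mrun {Sigma Theta} D _ _ _.

Definition monitor_tsat (Sigma Theta : Type) (D : flagging_monitor Sigma Theta)
    (s : trace Sigma) (i j : nat) : Prop :=
  i <= j /\ exists c, mrun D (mq0 D, mtheta0 D) (segment s i j) c /\ mF D c.1.

Inductive cltl (P : Type) :=
| Ltt | Lff
| Lap of P | Lnap of P
| Land of cltl P & cltl P
| Lor of cltl P & cltl P
| LX of cltl P
| LU of cltl P & cltl P.

Fixpoint ltl_sat (P : Type) (s : trace (letter P)) (i j : nat) (f : cltl P) : Prop :=
  match f with
  | Ltt => True
  | Lff => False
  | Lap e => s i e
  | Lnap e => ~~ s i e
  | Land f1 f2 => ltl_sat s i j f1 /\ ltl_sat s i j f2
  | Lor f1 f2 => ltl_sat s i j f1 \/ ltl_sat s i j f2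
  | LX f1 => i < j /\ ltl_sat s i.+1 j f1
  | LU f1 f2 => exists l, [/\ i <= l, l <= j, ltl_sat s l j f2
                          & forall k, i <= k -> k < l -> ltl_sat s k j f1]
  end.

Definition ltl_tsat (P : Type) (s : trace (letter P)) (i j : nat) (f : cltl P) : Prop :=
  i <= j /\ ltl_sat s i j f /\ (forall k, i <= k -> k < j -> ~ ltl_sat s i k f).

Definition trigger_sat (P Theta : Type) (D : flagging_monitor (letter P) Theta)
    (f : cltl P) (s : trace (letter P)) (i k : nat) : Prop :=
  exists j, [/\ i <= j, j <= k, monitor_tsat D s i j & ltl_tsat s j k f].

From mathcomp Require Import all_boot zify.
From Stdlib Require List.
Set Implicit Arguments.
Unset Strict Implicit.
Unset Printing Implicit Defensive.

(* A flagging state moves to the sink on the next letter, and the sink is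
   absorbing and not flagging; with determinism, the run of D from its
   initial configuration therefore flags at most once, so the split point j
   of a witness of D;phi is determined by i.  Tight satisfaction of phi from
   j then determines the end k. *)

Section MonitorRuns.
Variables (Sigma Theta : Type) (D : flagging_monitor Sigma Theta).

Lemma mstep_active c E c' : ~~ mF D c.1 -> c.1 != mbot D -> mstep D c E c' ->
  (c' = c /\ forall g a q', List.In (c.1, g, a, q') (mtrans D) -> ~~ g E c.2)
  \/ exists g a q', [/\ List.In (c.1, g, a, q') (mtrans D), g E c.2
                      & c' = (q', a E c.2)].
Proof.
move=> + + H; case: H => [q th e g a q' _ _ inq gE | q th e _ _ none | th e | q th e Fq] /= nF nb.
- by right; exists g, a, q'.
- by left.
- by rewrite eqxx in nb.
- by rewrite Fq in nF.
Qed.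

Lemma mstep_bot c E c' : c.1 = mbot D -> mstep D c E c' -> c' = c.
Proof.
move=> + H; case: H => [q th e g a q' _ nb _ _ | q th e _ nb _ | // | q th e _] /= qb.
- by rewrite qb eqxx in nb.
- by rewrite qb eqxx in nb.
- by rewrite qb.
Qed.

Lemma mstep_flag c E c' : mF D c.1 -> mstep D c E c' -> c' = (mbot D, c.2).
Proof.
move=> + H; case: H => [q th e g a q' nF _ _ _ | q th e nF _ _ | // | //] /= Fq.
all: by rewrite Fq in nF.
Qed.

Lemma mrun_bot c w c' : c.1 = mbot D -> mrun D c w c' -> c' = c.
Proof.
move=> cb H; elim: H cb => // c0 E w' c1 c2 step _ IH c0b.
have c10 := mstep_bot c0b step; subst c1; exact: IH.
Qed.

Lemma mrun_flag c E w c' : mF D c.1 -> mrun D c (E :: w) c' -> c'.1 = mbot D.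
Proof.
move=> Fc H; inversion H as [|c0 E0 w0 c1 c2 step run]; subst.
rewrite (mstep_flag Fc step) in run.
by rewrite (mrun_bot _ run).
Qed.

Lemma mrun_cat c w1 w2 c' : mrun D c (w1 ++ w2) c' ->
  exists c1, mrun D c w1 c1 /\ mrun D c1 w2 c'.
Proof.
elim: w1 c => [|E w1 IH] c /=; first by exists c; split=> //; constructor.
move=> H; inversion H as [|c0 E0 w0 c1 c2 step run]; subst.
have [c3 [run1 run2]] := IH _ run.
by exists c3; split=> //; apply: mrun_cons step run1.
Qed.

Hypothesis wfD : wf_monitor D.

Lemma mstep_det c E c1 c2 : mstep D c E c1 -> mstep D c E c2 -> c1 = c2.
Proof.
case: wfD => _ _ _ det.
case=> [q th e g a q' nF nb inq gE | q th e nF nb none | th e | q th e Fq] H2.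
- case: (mstep_active (c := (q, th)) nF nb H2) => [[_ none] | [g' [a' [q'' [inq' gE' ->]]]]].
    by have := none _ _ _ inq; rewrite gE.
  by case: (det _ _ _ _ _ _ _ _ _ inq inq' gE gE') => _ -> ->.
- case: (mstep_active (c := (q, th)) nF nb H2) => [[-> _] // | [g [a [q' [inq gE _]]]]].
  by have := none _ _ _ inq; rewrite gE.
- by rewrite (mstep_bot _ H2).
- by rewrite (mstep_flag (c := (q, th)) Fq H2).
Qed.

Lemma mrun_det c w c1 c2 : mrun D c w c1 -> mrun D c w c2 -> c1 = c2.
Proof.
move=> H; elim: H c2 => [c0 | c0 E w' c' c'' step _ IH] c2 H2;
  inversion H2 as [|c3 E3 w3 c4 c5 step2 run2]; subst => //.
by apply: IH; rewrite (mstep_det step step2).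
Qed.

End MonitorRuns.

Lemma segment_cat (Sigma : Type) (s : trace Sigma) i j1 j2 : i <= j1 -> j1 <= j2 ->
  segment s i j2 = segment s i j1 ++ segment s j1.+1 j2.
Proof.
move=> h1 h2; rewrite /segment -map_cat.
have -> : j2.+1 - i = (j1.+1 - i) + (j2.+1 - j1.+1) by lia.
by rewrite iotaD subnKC ?leqW.
Qed.

Lemma segment_cons (Sigma : Type) (s : trace Sigma) i j : i <= j ->
  segment s i j = s i :: segment s i.+1 j.
Proof. by move=> hij; rewrite /segment subSS subSn. Qed.

Lemma monitor_tsat_once (Sigma Theta : Type) (D : flagging_monitor Sigma Theta)
    (s : trace Sigma) i j1 j2 :
  wf_monitor D -> j1 < j2 -> monitor_tsat D s i j1 -> ~ monitor_tsat D s i j2.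
Proof.
move=> wfD lt [hij1 [c1 [run1 F1]]] [_ [c2 [run2 F2]]].
rewrite (segment_cat s hij1 (ltnW lt)) in run2.
have [c [run1' run12]] := mrun_cat run2.
rewrite segment_cons // -(mrun_det wfD run1 run1') in run12.
case: wfD => _ nFbot _ _.
by rewrite (mrun_flag F1 run12) (negbTE nFbot) in F2.
Qed.

Lemma monitor_tsat_unique (Sigma Theta : Type) (D : flagging_monitor Sigma Theta)
    (s : trace Sigma) i j1 j2 :
  wf_monitor D -> monitor_tsat D s i j1 -> monitor_tsat D s i j2 -> j1 = j2.
Proof.
move=> wfD M1 M2; case: (ltngtP j1 j2) => // lt.
- by case: (monitor_tsat_once wfD lt M1).
- by case: (monitor_tsat_once wfD lt M2).
Qed.

Lemma ltl_tsat_unique (P : Type) (s : trace (letter P)) (f : cltl P) j k1 k2 :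
  ltl_tsat s j k1 f -> ltl_tsat s j k2 f -> k1 = k2.
Proof.
move=> [jk1 [sat1 tight1]] [jk2 [sat2 tight2]].
case: (ltngtP k1 k2) => // lt.
- by case: (tight2 _ jk1 lt).
- by case: (tight1 _ jk2 lt).
Qed.

Theorem proposition3 (P Theta : Type) (D : flagging_monitor (letter P) Theta)
    (f : cltl P) (s : trace (letter P)) (i j : nat) :
  wf_monitor D -> i <= j ->
  trigger_sat D f s i j ->
  forall k, j < k -> ~ trigger_sat D f s i k.
Proof.
move=> wfD _ [m1 [_ _ M1 L1]] k jk [m2 [_ _ M2 L2]].
rewrite -(monitor_tsat_unique wfD M1 M2) in L2.
by rewrite (ltl_tsat_unique L1 L2) ltnn in jk.
Qed.
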